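(* Let $n$ be an odd positive integer, and suppose that $n-1$ queens are placed on $\mathbb{Z}_n^2$ without conflict. Then one more queen can be placed on $\mathbb{Z}_n^2$ so that the resulting $n$ queens are without conflict.
   Context: Queens are placed on distinct fields of the torus board $\mathbb{Z}_n^2$. Two queens at distinct fields $(x,y),(x',y')$ are in conflict iff $x=x'$, or $y=y'$, or $x+y=x'+y'$, or $x-y=x'-y'$ in $\mathbb{Z}_n$. A placement is without conflict if no two queens are in conflict. *)

(* The torus Z_n^2 is modelled as 'I_n * 'I_n with
   arithmetic taken modulo n (this also covers n = 1, unlike 'Z_n). *)
From mathcomp Require Import all_boot.
Set Implicit Arguments. Unset Strict Implicit. Unset Printing Implicit Defensive.

Definition field (n : nat) := ('I_n * 'I_n)%type.

(* Two distinct fields (x,y), (x',y') are in conflict iff x = x', or y = y',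
   or x + y = x' + y' in Z_n, or x - y = x' - y' in Z_n.
   Since y < n, (x + (n - y)) %% n is the residue of x - y mod n. *)
Definition conflict (n : nat) (p q : field n) : bool :=
  (p != q) &&
  [|| p.1 == q.1, p.2 == q.2,
      (p.1 + p.2) %% n == (q.1 + q.2) %% n
    | (p.1 + (n - p.2)) %% n == (q.1 + (n - q.2)) %% n].

Definition without_conflict (n : nat) (Q : {set field n}) : Prop :=
  forall p q, p \in Q -> q \in Q -> ~~ conflict p q.

From mathcomp Require Import all_boot ssralg zmodp.

Set Implicit Arguments.
Unset Strict Implicit.
Unset Printing Implicit Defensive.

(* Rows, columns, diagonals and antidiagonals are the fibres of the four
   additive labels (x, y) |-> x, y, x + y, x - y from Z_n^2 to Z_n.  The n - 1
   queens use n - 1 distinct values of each label, so exactly one value is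
   free; as the elements of Z_n sum to 0 for odd n, the free value is minus the
   sum of the used ones.  By additivity the field p = - (sum of the queens)
   carries the free value of every label at once. *)

Import GRing.Theory.
Local Open Scope ring_scope.

Section OddCyclicGroup.

Variable n : nat.
Hypothesis n_odd : odd n.+1.

Lemma sum_Zp_odd : \sum_(i : 'I_n.+1) i = 0.
Proof.
set S := \sum_(i : 'I_n.+1) i.
(* negation permutes 'I_n.+1, so S = - S *)
have S2 : S *+ 2 = 0.
  by rewrite mulr2n {1}/S (reindex_inj (@oppr_inj 'I_n.+1)) /= sumrN addNr.
have Sn : S *+ n.+1 = 0 by apply: val_inj; rewrite Zp_mulrn /= modnMl.
by move: Sn; rewrite -[X in _ *+ X = _]odd_double_half n_odd mulrnDr -mul2n
  mulrnA S2 mul0rn addr0 mulr1n.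
Qed.

Lemma setC_Zp_card_n (A : {set 'I_n.+1}) :
  #|A| = n -> ~: A = [set - \sum_(i in A) i].
Proof.
move=> cardA; have /cards1P[m Am] : #|~: A| == 1%N.
  by rewrite -(eqn_add2l #|A|) cardsC card_ord cardA addn1.
rewrite Am; congr [set _]; apply/eqP; rewrite -addr_eq0 addrC; apply/eqP.
rewrite -[in RHS]sum_Zp_odd [RHS](bigID (mem A)) /=; congr (_ + _).
rewrite (eq_bigl (mem (~: A))) => [|i]; first by rewrite Am big_set1.
by rewrite !inE.
Qed.

Lemma neg_sum_label_notin (T : finType) (Q : {set T}) (f : T -> 'I_n.+1) :
  #|Q| = n -> {in Q &, injective f} -> - \sum_(q in Q) f q \notin f @: Q.
Proof.
move=> cardQ f_inj; rewrite -(big_imset id f_inj) -in_setC.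
by rewrite setC_Zp_card_n ?card_in_imset // set11.
Qed.

End OddCyclicGroup.

Lemma conflict_sym n (p q : field n) : conflict p q = conflict q p.
Proof.
by rewrite /conflict (eq_sym p.1) (eq_sym p.2) (eq_sym ((p.1 + p.2) %% n))
  (eq_sym ((p.1 + (n - p.2)) %% n)) (eq_sym p).
Qed.

Lemma conflictE n (p q : field n.+1) :
  conflict p q = (p != q) &&
    [|| p.1 == q.1, p.2 == q.2, p.1 + p.2 == q.1 + q.2
      | p.1 - p.2 == q.1 - q.2].
Proof.
have val_subZp (x y : 'I_n.+1) : val (x - y) = ((x + (n.+1 - y)) %% n.+1)%N.
  by rewrite /= modnDmr.
by rewrite /conflict -!val_subZp.
Qed.

Lemma without_conflict_inj n (Q : {set field n}) (T : eqType)
    (L : field n -> T) :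
  without_conflict Q -> (forall p q, p != q -> L p = L q -> conflict p q) ->
  {in Q &, injective L}.
Proof.
move=> freeQ L_conflict p q pQ qQ Lpq; apply/eqP.
by apply: contraNT (freeQ p q pQ qQ) => /L_conflict; apply.
Qed.

Section NewQueen.

Variables (n : nat) (Q : {set field n.+1}).
Hypotheses (n_odd : odd n.+1) (cardQ : #|Q| = n) (freeQ : without_conflict Q).

Let p : field n.+1 := - \sum_(q in Q) q.

Lemma label_avoids_neg_sum (L : {additive field n.+1 -> 'I_n.+1}) :
  (forall q q', q != q' -> L q = L q' -> conflict q q') ->
  {in Q, forall q, L p != L q}.
Proof.
move=> L_conflict q qQ; have L_inj := without_conflict_inj freeQ L_conflict.
rewrite raddfN raddf_sum.
apply: contraNneq (neg_sum_label_notin n_odd cardQ L_inj) => ->.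
exact: imset_f.
Qed.

Lemma neg_sum_avoids_lines :
  {in Q, forall q, [/\ p.1 != q.1, p.2 != q.2,
                       p.1 + p.2 != q.1 + q.2 & p.1 - p.2 != q.1 - q.2]}.
Proof.
move=> q qQ; split;
  [apply: (@label_avoids_neg_sum fst) | apply: (@label_avoids_neg_sum snd)
  | apply: (@label_avoids_neg_sum (fst \+ snd))
  | apply: (@label_avoids_neg_sum (fst \- snd))] => //;
by move=> q1 q2 q12 /= L12; rewrite conflictE q12 L12 eqxx /= ?orbT.
Qed.

Lemma neg_sum_notin : p \notin Q.
Proof. by apply/negP => /neg_sum_avoids_lines[]; rewrite eqxx. Qed.

Lemma neg_sum_free : without_conflict (p |: Q).
Proof.
have p_free q : q \in Q -> ~~ conflict p q.
  case/neg_sum_avoids_lines=> /negbTE col /negbTE row /negbTE diag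
    /negbTE antidiag.
  by rewrite conflictE col row diag antidiag andbF.
move=> x y; rewrite !in_setU1.
case/predU1P=> [-> | xQ]; case/predU1P=> [-> | yQ].
- by rewrite /conflict eqxx.
- exact: p_free.
- by rewrite conflict_sym p_free.
- exact: freeQ.
Qed.

End NewQueen.

Theorem mainTheorem5 (n : nat) (Q : {set field n}) :
  odd n -> 0 < n -> #|Q| = n.-1 -> without_conflict Q ->
  exists p : field n, p \notin Q /\ without_conflict (p |: Q).
Proof.
case: n Q => [//|n] Q n_odd _ cardQ freeQ.
exists (- \sum_(q in Q) q); split.
- exact: neg_sum_notin.
- exact: neg_sum_free.
Qed.
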